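(* Let $G$ be a three-dimensional Lie group with Lie algebra $\mathfrak{g}$. Then $G$ admits a left-invariant contact form $\omega$ (with contact distribution $D=\ker\omega$) if and only if there exists a completely nonholonomic left-invariant rank two distribution $D$ on $G$ together with a left-invariant rank one distribution $D^{\perp}$ complementary to $D$ such that $[D^{\perp}(e),D(e)]\subset D(e)$; moreover, in this situation there exists a non-zero left-invariant $1$-form $\omega$ on $G$ with $\omega(D)=0$ (and it is a contact form).
   Context: A $1$-form $\omega$ on a $3$-manifold is contact if $\omega\wedge d\omega\neq 0$ everywhere. A distribution is completely nonholonomic if iterated Lie brackets of vector fields tangent to it span the whole tangent space at each point. Left-invariant distributions are identified with subspaces $D(e)\subset\mathfrak{g}$. *)

(* real Lie algebras of dimension 3 as vectType's over a realType. *)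
From HB Require Import structures.
From mathcomp Require Import all_boot all_order all_algebra.
From mathcomp Require Import reals.
Set Implicit Arguments. Unset Strict Implicit. Unset Printing Implicit Defensive.
Import Order.TTheory GRing.Theory Num.Theory.
Local Open Scope ring_scope.


Section LieDefs.
Variables (R : realType) (V : vectType R).

Definition is_lie_bracket (br : V -> V -> V) : Prop :=
  [/\ (forall (a : R) (x y z : V), br (a *: x + y) z = a *: br x z + br y z),
      (forall (a : R) (x y z : V), br z (a *: x + y) = a *: br z x + br z y),
      (forall x : V, br x x = 0) &
      (forall x y z : V, br x (br y z) + br y (br z x) + br z (br x y) = 0)].

(* Exterior derivative of a left-invariant 1-form, evaluated on left-invariant
   fields:  d omega (X,Y) = X(omega Y) - Y(omega X) - omega([X,Y]) = - omega([X,Y]). *)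
Definition dform (br : V -> V -> V) (omega : {scalar V}) (x y : V) : R :=
  - omega (br x y).

Definition wedge_d (br : V -> V -> V) (omega : {scalar V}) (x y z : V) : R :=
  omega x * dform br omega y z - omega y * dform br omega x z
  + omega z * dform br omega x y.

(* left-invariant contact form: omega /\ d omega <> 0 (at e, hence everywhere) *)
Definition contact_form (br : V -> V -> V) (omega : {scalar V}) : Prop :=
  exists x y z : V, wedge_d br omega x y z != 0.

Inductive iter_bracket (br : V -> V -> V) (D : {vspace V}) : V -> Prop :=
  | ib_base x : x \in D -> iter_bracket br D x
  | ib_br x y : iter_bracket br D x -> iter_bracket br D y ->
                iter_bracket br D (br x y).

Definition completely_nonholonomic (br : V -> V -> V) (D : {vspace V}) : Prop :=
  exists s : seq V, (forall x, x \in s -> iter_bracket br D x) /\ (<<s>> = fullv)%VS.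

End LieDefs.

From HB Require Import structures.
From mathcomp Require Import all_boot all_order all_algebra.
From mathcomp Require Import reals.
From Stdlib Require Import Classical.
From mathcomp Require Import ring.
Set Implicit Arguments. Unset Strict Implicit. Unset Printing Implicit Defensive.
Import Order.TTheory GRing.Theory Num.Theory.
Local Open Scope ring_scope.

(** Since [d omega (x, y) = - omega [x, y]], writing every vector as a kernel
    part plus a multiple of a fixed [u] with [omega u = 1] shows that
    [omega /\ d omega = 0] exactly when [ker omega] is a subalgebra.  So a
    contact form yields kernel vectors [e1], [e2] with [omega [e1, e2] <> 0];
    then [e1, e2, [e1, e2]] is a basis, [D = span (e1, e2)] is bracket
    generating, and [u] can be corrected inside [D] into a [v] with
    [[v, D] <= ker omega = D].  Conversely, for a bracket generating plane [D]
    the form with kernel [D] does not vanish on [[D, D]], which is exactly the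
    contact condition. *)

Section Bracket.
Variables (R : realType) (V : vectType R) (br : V -> V -> V).
Hypothesis hlie : is_lie_bracket br.

Lemma brDl x y z : br (x + y) z = br x z + br y z.
Proof. by case: hlie => hl _ _ _; have := hl 1 x y z; rewrite !scale1r. Qed.

Lemma brDr x y z : br z (x + y) = br z x + br z y.
Proof. by case: hlie => _ hr _ _; have := hr 1 x y z; rewrite !scale1r. Qed.

Lemma br0l z : br 0 z = 0.
Proof. by apply/(addrI (br 0 z)); rewrite -brDl !addr0. Qed.

Lemma br0r z : br z 0 = 0.
Proof. by apply/(addrI (br z 0)); rewrite -brDr !addr0. Qed.

Lemma brZl a x z : br (a *: x) z = a *: br x z.
Proof. by case: hlie => hl _ _ _; have := hl a x 0 z; rewrite br0l !addr0. Qed.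

Lemma brZr a x z : br z (a *: x) = a *: br z x.
Proof. by case: hlie => _ hr _ _; have := hr a x 0 z; rewrite br0r !addr0. Qed.

Lemma brr x : br x x = 0.
Proof. by case: hlie. Qed.

Lemma brC x y : br y x = - br x y.
Proof.
apply/eqP; rewrite -addr_eq0 addrC.
by have := brr (x + y); rewrite brDl !brDr !brr add0r addr0 => ->.
Qed.

Lemma brBl x y z : br (x - y) z = br x z - br y z.
Proof. by rewrite brDl -scaleN1r brZl scaleN1r. Qed.

End Bracket.

Section LinearForms.
Variables (R : realType) (V : vectType R).
Implicit Types (D : {vspace V}) (om : {scalar V}).

Lemma memv_span2P (e1 e2 x : V) :
  reflect (exists c d, x = c *: e1 + d *: e2) (x \in <<[:: e1; e2]>>%VS).
Proof.
rewrite span_cons span_seq1; apply: (iffP memv_addP).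
  by case=> _ /vlineP[c ->] [_ /vlineP[d ->] ->]; exists c, d.
case=> c [d ->]; exists (c *: e1); last exists (d *: e2).
all: by rewrite // memvZ ?memv_line.
Qed.

Lemma exists_scalar_line D v :
  v \notin D -> exists om, om v = 1 /\ forall x, x \in D -> om x = 0.
Proof.
move=> vD; have v0 : v != 0 by apply: contraNneq vD => ->; rewrite mem0v.
have capvD : (<[v]> :&: D = 0)%VS.
  apply/eqP; rewrite -subv0; apply/subvP=> x; rewrite memv_cap memv0.
  case/andP=> /vlineP[c ->] cvD; apply/eqP; have [-> | c0] := eqVneq c 0.
    by rewrite scale0r.
  by case/negP: vD; rewrite -[v](scalerK c0) memvZ.
pose om : {scalar V} := (coord [tuple v] ord0 \o daddv_pi <[v]> D)%FUN.
have coord_v : coord [tuple v] ord0 v = 1.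
  by have := @coord_free _ _ 1 [tuple v] ord0 ord0; rewrite seq1_free v0 => ->.
exists om; split; first by rewrite /om /= daddv_pi_id ?memv_line.
move=> x xD; have := daddv_pi_add capvD (subvP (addvSr _ _) _ xD).
rewrite (daddv_pi_id _ xD) 1?capvC // => /(canRL (addrK _)); rewrite subrr.
by rewrite /om /= => ->; rewrite linear0.
Qed.

Lemma scalar_ker_subv D v om :
  (D + <[v]> = fullv)%VS -> om v != 0 -> (forall x, x \in D -> om x = 0) ->
  forall x, om x = 0 -> x \in D.
Proof.
move=> Dv_full omv0 omD x; have := memvf x; rewrite -Dv_full.
case/memv_addP=> d dD [_ /vlineP[c ->] ->].
rewrite linearD linearZ /= omD // add0r => /eqP; rewrite mulf_eq0 (negbTE omv0).
by rewrite orbF => /eqP ->; rewrite scale0r addr0.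
Qed.

Lemma addv_line_full D v om :
  \dim (fullv : {vspace V}) = (\dim D).+1 -> om v = 1 ->
  (forall x, x \in D -> om x = 0) ->
  (D + <[v]> = fullv)%VS /\ (D :&: <[v]> = 0)%VS.
Proof.
move=> dimV omv omD.
have v0 : v != 0 by apply: contra_eq_neq omv => ->; rewrite linear0 eq_sym oner_neq0.
have capDv : (D :&: <[v]> = 0)%VS.
  apply/eqP; rewrite -subv0; apply/subvP=> x; rewrite memv_cap memv0.
  case/andP=> /omD omx /vlineP[c xv]; move: omx.
  by rewrite xv linearZ /= omv mulr1 => ->; rewrite scale0r.
split=> //; apply/eqP; rewrite eqEdim subvf dimV /=.
by have := dimv_sum_cap D <[v]>; rewrite capDv dimv0 addn0 dim_vline v0 addn1 => ->.
Qed.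

End LinearForms.

Section Nonholonomic.
Variables (R : realType) (V : vectType R) (br : V -> V -> V).
Implicit Types D : {vspace V}.

Lemma iter_bracket_subv D :
  (forall x y, x \in D -> y \in D -> br x y \in D) ->
  forall x, iter_bracket br D x -> x \in D.
Proof. by move=> brD x; elim=> // y z _ yD _ zD; exact: brD. Qed.

Lemma cnh_bracket_notin D :
  completely_nonholonomic br D -> D != fullv ->
  exists x y, [/\ x \in D, y \in D & br x y \notin D].
Proof.
case=> s [s_br s_full] D_full; apply: NNPP => no_out; case/eqP: D_full.
suff brD x y : x \in D -> y \in D -> br x y \in D.
  apply/eqP; rewrite eqEsubv subvf -s_full.
  by apply/span_subvP=> x /s_br; apply: iter_bracket_subv.
move=> xD yD; apply: NNPP => /negP xyD; apply: no_out; by exists x, y.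
Qed.

Lemma cnh_span_bracket_pair (e1 e2 : V) :
  \dim (fullv : {vspace V}) = 3%N -> free [:: br e1 e2; e1; e2] ->
  completely_nonholonomic br <<[:: e1; e2]>>%VS.
Proof.
move=> dimV free3; exists [:: br e1 e2; e1; e2]; split.
  have e1D : e1 \in <<[:: e1; e2]>>%VS by apply/memv_span2P; exists 1, 0;
    rewrite scale1r scale0r addr0.
  have e2D : e2 \in <<[:: e1; e2]>>%VS by apply/memv_span2P; exists 0, 1;
    rewrite scale1r scale0r add0r.
  move=> x; rewrite !inE => /or3P[] /eqP ->; do ?[exact: ib_base].
  by apply: ib_br; apply: ib_base.
by apply/eqP; rewrite eqEdim subvf dimV (eqP free3).
Qed.

End Nonholonomic.

Section ContactForms.
Variables (R : realType) (V : vectType R) (br : V -> V -> V).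
Hypothesis hlie : is_lie_bracket br.
Variable om : {scalar V}.

Definition ker_subalgebra : Prop :=
  forall x y, om x = 0 -> om y = 0 -> om (br x y) = 0.

Lemma ker_subalgebra_br u x y : om u = 1 -> ker_subalgebra ->
  om (br x y) = om y * om (br (x - om x *: u) u) - om x * om (br (y - om y *: u) u).
Proof.
move=> omu kerD.
have br_split x0 y0 a b : om x0 = 0 -> om y0 = 0 ->
    om (br (x0 + a *: u) (y0 + b *: u)) = b * om (br x0 u) - a * om (br y0 u).
  move=> x0_0 y0_0; rewrite (brDl hlie) !(brDr hlie) !(brZl hlie) !(brZr hlie).
  rewrite (brr hlie) !scaler0 addr0 (brC hlie y0 u) !linearD !linearZ linearN /=.
  by rewrite (kerD _ _ x0_0 y0_0); ring.
have ker_u w : om (w - om w *: u) = 0 by rewrite linearB linearZ /= omu mulr1 subrr.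
by rewrite -(br_split _ _ (om x) (om y) (ker_u x) (ker_u y)) !subrK.
Qed.

Lemma wedge_d_ker_subalgebra u x y z : om u = 1 -> ker_subalgebra ->
  wedge_d br om x y z = 0.
Proof.
move=> omu kerD; have split_br a b := ker_subalgebra_br a b omu kerD.
by rewrite /wedge_d /dform (split_br y z) (split_br x z) (split_br x y); ring.
Qed.

Lemma contact_form_unit : contact_form br om -> exists u, om u = 1.
Proof.
case=> x [y [z w_neq0]].
suff [u omu] : exists u, om u != 0 by exists ((om u)^-1 *: u); rewrite linearZ /= mulVf.
have [omx|] := eqVneq (om x) 0; last by exists x.
have [omy|] := eqVneq (om y) 0; last by exists y.
have [omz|] := eqVneq (om z) 0; last by exists z.
by move: w_neq0; rewrite /wedge_d omx omy omz !mul0r subrr addr0 eqxx.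
Qed.

Lemma contact_form_ker_pair : contact_form br om ->
  exists e1 e2, [/\ om e1 = 0, om e2 = 0 & om (br e1 e2) != 0].
Proof.
move=> omC; have [u omu] := contact_form_unit omC.
apply: NNPP => no_pair; have kerD : ker_subalgebra.
  move=> e1 e2 e1_0 e2_0; apply/eqP; apply: contraT => e12.
  by exfalso; apply: no_pair; exists e1, e2.
by case: omC => x [y [z]]; rewrite (wedge_d_ker_subalgebra _ _ _ omu kerD) eqxx.
Qed.

Lemma wedge_d_ker e1 e2 v : om e1 = 0 -> om e2 = 0 ->
  wedge_d br om e1 e2 v = - (om v * om (br e1 e2)).
Proof. by move=> e1_0 e2_0; rewrite /wedge_d /dform e1_0 e2_0 !mul0r subrr add0r mulrN. Qed.

Section KernelPair.
Variables (e1 e2 : V).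
Hypotheses (e1_0 : om e1 = 0) (e2_0 : om e2 = 0) (e12 : om (br e1 e2) != 0).

Lemma free_bracket_pair : free [:: br e1 e2; e1; e2].
Proof.
have e2_neq0 : e2 != 0 by apply: contraNneq e12 => ->; rewrite (br0r hlie) linear0.
have e1_e2 : e1 \notin <[e2]>%VS.
  apply/negP => /vlineP[c e1c]; move/eqP: e12; apply.
  by rewrite e1c (brZl hlie) (brr hlie) scaler0 linear0.
rewrite free_cons (free_cons e1) span_seq1 e1_e2 seq1_free e2_neq0 /= andbT.
apply/negP => /memv_span2P[c [d e12_cd]]; move/eqP: e12; apply.
by rewrite e12_cd linearD !linearZ /= e1_0 e2_0 !mulr0 addr0.
Qed.

(** Correcting [u] by [a e1 + b e2] changes [om [v, e1]] by [b om [e2, e1]] and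
    [om [v, e2]] by [a om [e1, e2]]: both can be killed as [om [e1, e2] <> 0]. *)
Lemma exists_normalizing_transversal u : om u = 1 ->
  exists v, [/\ om v = 1, om (br v e1) = 0 & om (br v e2) = 0].
Proof.
move=> omu; pose k := om (br e1 e2).
exists (u - (om (br u e2) / k) *: e1 + (om (br u e1) / k) *: e2); split.
- by rewrite linearD linearB !linearZ /= omu e1_0 e2_0 !mulr0 subr0 addr0.
- rewrite (brDl hlie) (brBl hlie) !(brZl hlie) (brr hlie) (brC hlie e1 e2) scaler0.
  by rewrite linearD linearB !linearZ linearN linear0 /= -/k subr0 mulrN divfK // subrr.
- rewrite (brDl hlie) (brBl hlie) !(brZl hlie) (brr hlie) scaler0 addr0.
  by rewrite linearB !linearZ /= -/k divfK // subrr.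
Qed.

End KernelPair.

End ContactForms.

Section Proposition.
Variables (R : realType) (V : vectType R) (br : V -> V -> V).
Hypotheses (hlie : is_lie_bracket br) (hdim : \dim (fullv : {vspace V}) = 3%N).

Lemma contact_form_distribution (om : {scalar V}) : contact_form br om ->
  exists D Dp : {vspace V},
    [/\ \dim D = 2%N, completely_nonholonomic br D, \dim Dp = 1%N,
        ((D + Dp = fullv)%VS /\ (D :&: Dp = 0)%VS) &
        (forall x y, x \in Dp -> y \in D -> br x y \in D)].
Proof.
move=> omC; have [u omu] := contact_form_unit omC.
have [e1 [e2 [e1_0 e2_0 e12]]] := contact_form_ker_pair hlie omC.
have [v [omv v_e1 v_e2]] := exists_normalizing_transversal hlie e1_0 e2_0 e12 omu.
have free3 := free_bracket_pair hlie e1_0 e2_0 e12.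
pose D := <<[:: e1; e2]>>%VS.
have dimD : \dim D = 2%N by move: free3; rewrite free_cons => /andP[_ /eqP].
have omD x : x \in D -> om x = 0.
  by case/memv_span2P=> c [d ->]; rewrite linearD !linearZ /= e1_0 e2_0 !mulr0 addr0.
have [Dv_full capDv] : (D + <[v]> = fullv)%VS /\ (D :&: <[v]> = 0)%VS.
  by apply: addv_line_full omv omD; rewrite hdim dimD.
have v_neq0 : v != 0 by apply: contra_eq_neq omv => ->; rewrite linear0 eq_sym oner_neq0.
exists D, <[v]>%VS; split=> //.
- exact: cnh_span_bracket_pair.
- by rewrite dim_vline v_neq0.
move=> _ y /vlineP[c ->] yD; rewrite (brZl hlie); apply: memvZ.
apply: (scalar_ker_subv Dv_full _ omD); first by rewrite omv oner_neq0.
case/memv_span2P: yD => a [b ->].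
by rewrite (brDr hlie) !(brZr hlie) linearD !linearZ /= v_e1 v_e2 !mulr0 addr0.
Qed.

Lemma distribution_contact_form (D Dp : {vspace V}) :
  \dim D = 2%N -> completely_nonholonomic br D -> \dim Dp = 1%N ->
  (D + Dp = fullv)%VS -> (D :&: Dp = 0)%VS ->
  exists om : {scalar V},
    (exists x, om x != 0) /\ (forall x, x \in D -> om x = 0) /\ contact_form br om.
Proof.
move=> dimD cnhD dimDp DDp_full capDDp; pose v := vpick Dp.
have v_neq0 : v != 0 by rewrite vpick0 -dimv_eq0 dimDp.
have Dp_v : Dp = <[v]>%VS.
  by apply/esym/eqP; rewrite eqEdim -memvE memv_pick dim_vline v_neq0 dimDp.
have Dv_full : (D + <[v]> = fullv)%VS by rewrite -Dp_v.
have vD : v \notin D.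
  by move: v_neq0; rewrite -memv0 -capDDp memv_cap memv_pick andbT.
have [om [omv omD]] := exists_scalar_line vD.
have omv_neq0 : om v != 0 by rewrite omv oner_neq0.
have [|e1 [e2 [e1D e2D e12]]] := cnh_bracket_notin cnhD.
  by apply/eqP => D_full; move: dimD; rewrite D_full hdim.
exists om; split; first by exists v.
split=> //; exists e1, e2, v.
rewrite (wedge_d_ker br v (omD _ e1D) (omD _ e2D)) omv mul1r oppr_eq0.
by apply: contraNneq e12; exact: (scalar_ker_subv Dv_full omv_neq0 omD).
Qed.

End Proposition.

Unset Implicit Arguments.

Theorem proposition1 (R : realType) (V : vectType R) (br : V -> V -> V)
  (hdim : \dim (fullv : {vspace V}) = 3%N) (hlie : is_lie_bracket br) :
  ((exists omega : {scalar V}, contact_form br omega) <->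
   (exists D Dp : {vspace V},
      [/\ \dim D = 2%N, completely_nonholonomic br D, \dim Dp = 1%N,
          ((D + Dp = fullv)%VS /\ (D :&: Dp = 0)%VS) &
          (forall x y, x \in Dp -> y \in D -> br x y \in D)]))
  /\
  (forall D Dp : {vspace V},
      \dim D = 2%N -> completely_nonholonomic br D -> \dim Dp = 1%N ->
      (D + Dp = fullv)%VS -> (D :&: Dp = 0)%VS ->
      (forall x y, x \in Dp -> y \in D -> br x y \in D) ->
      exists omega : {scalar V},
        (exists x, omega x != 0) /\ (forall x, x \in D -> omega x = 0) /\
        contact_form br omega).
Proof.
have to_form := @distribution_contact_form R V br hdim.
split; last first.
  move=> D Dp dimD cnhD dimDp DDp_full capDDp _.
  exact: to_form D Dp dimD cnhD dimDp DDp_full capDDp.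
split=> [[om omC] | [D [Dp [dimD cnhD dimDp [DDp_full capDDp] _]]]].
  exact: contact_form_distribution omC.
have [om [_ [_ omC]]] := to_form D Dp dimD cnhD dimDp DDp_full capDDp.
by exists om.
Qed.
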